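(* Let $\hat\Pi_t=\hat\sigma_t(M_t)$, $t=0,\dots,T$, be an approximate information state with parameters $\epsilon_t,\delta_t,\lambda_t$. For $t=0,\dots,T$ let $L_{\hat V_{t+1}}$ be a Lipschitz constant of $\hat V_{t+1}$ (with $L_{\hat V_{T+1}}=0$), and define $\alpha_{T+1}:=0$ and $\alpha_t:=\max(\epsilon_t,\ \alpha_{t+1}+L_{\hat V_{t+1}}\delta_t)$. Then for all $t=0,\dots,T$, $m_t\in[[M_t]]$, $u_t\in[[U_t]]$: $$|Q_t(m_t,u_t)-\hat Q_t(\hat\sigma_t(m_t),u_t)|\le\alpha_t,\qquad |V_t(m_t)-\hat V_t(\hat\sigma_t(m_t))|\le\alpha_t.$$
   Context: Uncertain variables: fix a sample space $\Omega$; an uncertain variable with values in a set $\mathcal{X}$ is a map $X:\Omega\to\mathcal{X}$, with marginal range $[[X]]:=\{X(\omega):\omega\in\Omega\}$; uncertain variables are independent if their joint range is the product of their marginal ranges. Hausdorff distance: for nonempty subsets $\mathcal{A},\mathcal{B}$ of a metric space $(\mathcal{S},\eta)$, $\mathcal{H}(\mathcal{A},\mathcal{B}):=\max\{\sup_{a\in\mathcal{A}}\inf_{b\in\mathcal{B}}\eta(a,b),\sup_{b\in\mathcal{B}}\inf_{a\in\mathcal{A}}\eta(a,b)\}$. A function $f:\mathcal{X}\to\mathcal{Y}$ between metric spaces is $L$-invertible if there is $L_{f^{-1}}\ge0$ with $\mathcal{H}(f^{-1}(y^1),f^{-1}(y^2))\le L_{f^{-1}}\eta(y^1,y^2)$ for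 all $y^1,y^2$. System: horizon $T\in\mathbb{N}$. For $t=0,\dots,T$ there are independent disturbances $W_t\in\mathcal{W}_t$, actions $U_t\in\mathcal{U}_t$ taking values in a given set $[[U_t]]\subseteq\mathcal{U}_t$, observations $Y_0=h_0(W_0)$, $Y_{t+1}=h_{t+1}(W_{0:t},U_{0:t})$, and costs $C_t=d_t(W_{0:t},U_{0:t})\in\mathcal{C}_t\subset\mathbb{R}_{\ge0}$. Standing assumptions: $\mathcal{U}_t,\mathcal{W}_t,\mathcal{Y}_t$ are bounded subsets of a metric space $(\mathcal{S},\eta)$ (product spaces carry a metric also denoted $\eta$), the $\mathcal{C}_t$ are bounded subsets of $\mathbb{R}_{\ge0}$, each $h_t$ is Lipschitz and $L$-invertible, each $d_t$ is Lipschitz. The memory is $M_t=(Y_{0:t},U_{0:t-1})\in\mathcal{M}_t:=\prod_{\ell=0}^t\mathcal{Y}_\ell\times\prod_{\ell=0}^{t-1}\mathcal{U}_\ell$. Strategy-independent ranges: for $m_t=(y_{0:t},u_{0:t-1})$ let $\mathcal{W}(m_t)$ be the set of $w_{0:t}\in\prod_{\ell=0}^t[[W_\ell]]$ with $y_0=h_0(w_0)$ and $y_\ell=h_\ell(w_{0:\ell-1},u_{0:\ell-1})$ for $\ell=1,\dots,t$. Let $[[M_t]]$ be the set of such $m_t$ with $u_\ell\in[[U_\ell]]$ and $\mathcal{W}(m_t)\neq\emptyset$. For $m_t\in[[M_t]]$, $u_t\in[[U_t]]$: $[[C_t|m_t,u_t]]:=\{d_t(w_{0:t},u_{0:t}):w_{0:t}\in\mathcal{W}(m_t)\}$,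 $[[Y_{t+1}|m_t,u_t]]:=\{h_{t+1}(w_{0:t},u_{0:t}):w_{0:t}\in\mathcal{W}(m_t)\}$, $[[M_{t+1}|m_t,u_t]]:=\{(m_t,u_t,y_{t+1}):y_{t+1}\in[[Y_{t+1}|m_t,u_t]]\}$. For functions $\hat\sigma_t$ on $\mathcal{M}_t$ and $\hat\Pi_t=\hat\sigma_t(M_t)$: $[[\hat\Pi_t]]:=\hat\sigma_t([[M_t]])$, $[[M_t|\hat\pi_t]]:=\{m_t\in[[M_t]]:\hat\sigma_t(m_t)=\hat\pi_t\}$, $[[\hat\Pi_{t+1}|m_t,u_t]]:=\{\hat\sigma_{t+1}(m_{t+1}):m_{t+1}\in[[M_{t+1}|m_t,u_t]]\}$, and for $Z\in\{C_t,Y_{t+1},\hat\Pi_{t+1}\}$, $[[Z|\hat\pi_t,u_t]]:=\bigcup_{m_t\in[[M_t|\hat\pi_t]]}[[Z|m_t,u_t]]$. Memory-based DP: $V_{T+1}\equiv0$ and for $t=T,\dots,0$, $Q_t(m_t,u_t):=\max\{\sup_{c\in[[C_t|m_t,u_t]]}c,\ \sup_{m_{t+1}\in[[M_{t+1}|m_t,u_t]]}V_{t+1}(m_{t+1})\}$, $V_t(m_t):=\inf_{u_t\in[[U_t]]}Q_t(m_t,u_t)$. Approximate information state: $\hat\Pi_t=\hat\sigma_t(M_t)$ with $L$-invertible $\hat\sigma_t:\mathcal{M}_t\to\hat{\mathcal{P}}_t$, $\hat{\mathcal{P}}_t$ bounded with metric $\eta$, such that for each $t=0,\dots,T$ there are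 $\epsilon_t,\delta_t,\lambda_t\ge0$ with, for all $m_t\in[[M_t]]$, $u_t\in[[U_t]]$: (1) $|\sup_{c\in[[C_t|m_t,u_t]]}c-\sup_{c\in[[C_t|\hat\sigma_t(m_t),u_t]]}c|\le\epsilon_t$; (2) $\mathcal{H}([[\hat\Pi_{t+1}|m_t,u_t]],[[\hat\Pi_{t+1}|\hat\sigma_t(m_t),u_t]])\le\delta_t$; (3) for all $\hat\pi_t^1,\hat\pi_t^2\in[[\hat\Pi_t]]$, $\mathcal{H}([[\hat\Pi_{t+1}|\hat\pi_t^1,u_t]],[[\hat\Pi_{t+1}|\hat\pi_t^2,u_t]])\le\lambda_t\,\eta(\hat\pi_t^1,\hat\pi_t^2)$. Approximate DP: $\hat V_{T+1}\equiv0$ and for $t=T,\dots,0$, $\hat\pi_t\in[[\hat\Pi_t]]$, $u_t\in[[U_t]]$: $\hat Q_t(\hat\pi_t,u_t):=\max\{\sup_{c\in[[C_t|\hat\pi_t,u_t]]}c,\ \sup_{\hat\pi_{t+1}\in[[\hat\Pi_{t+1}|\hat\pi_t,u_t]]}\hat V_{t+1}(\hat\pi_{t+1})\}$, $\hat V_t(\hat\pi_t):=\inf_{u_t\in[[U_t]]}\hat Q_t(\hat\pi_t,u_t)$. (Each $\hat V_t$ is Lipschitz on $[[\hat\Pi_t]]$.) *)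

From HB Require Import structures.
From mathcomp Require Import all_boot all_order all_algebra.
From mathcomp Require Import boolp classical_sets reals.
Set Implicit Arguments. Unset Strict Implicit. Unset Printing Implicit Defensive.
Import Order.TTheory GRing.Theory Num.Theory.
Local Open Scope classical_set_scope.
Local Open Scope ring_scope.

Section Defs.
Variable R : realType.

Section Metric.
Variables (X Y : Type).

Definition is_metric (eta : X -> X -> R) : Prop :=
  forall x y z, 0 <= eta x y /\ (eta x y = 0 <-> x = y) /\
                eta x y = eta y x /\ eta x z <= eta x y + eta y z.

Definition mbounded (eta : X -> X -> R) (A : set X) : Prop :=
  exists B : R, forall x y, A x -> A y -> eta x y <= B.

Definition hdist (eta : X -> X -> R) (A B : set X) : R :=
  Num.max (sup [set inf [set eta a b | b in B] | a in A])
          (sup [set inf [set eta a b | a in A] | b in B]).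

Definition lipschitz_on (etaX : X -> X -> R) (etaY : Y -> Y -> R)
    (A : set X) (f : X -> Y) : Prop :=
  exists L : R, 0 <= L /\
    forall x1 x2, A x1 -> A x2 -> etaY (f x1) (f x2) <= L * etaX x1 x2.

(* f restricted to the domain A is L-invertible (the Hausdorff distance being
   defined for nonempty sets, we quantify over points of the image f @` A) *)
Definition L_invertible_on (etaX : X -> X -> R) (etaY : Y -> Y -> R)
    (A : set X) (f : X -> Y) : Prop :=
  exists L : R, 0 <= L /\
    forall y1 y2, (f @` A) y1 -> (f @` A) y2 ->
      hdist etaX (A `&` (f @^-1` [set y1])) (A `&` (f @^-1` [set y2]))
        <= L * etaY y1 y2.
End Metric.

(* All of U_t, W_t, Y_t take values in the metric space S.
   w_{0:t}, y_{0:t}, u_{0:t} are encoded as sequences (index l = time l).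
   A memory m_t = (y_{0:t}, u_{0:t-1}) is a pair of sequences.
   Ur t = [[U_t]], Wr t = [[W_t]] (marginal ranges),
   h0 = h_0, hs t = h_{t+1} (applied to (w_{0:t}, u_{0:t})),
   d t = d_t (applied to (w_{0:t}, u_{0:t})),
   sigma t = \hat\sigma_t. *)
Section System.
Variables (S P : Type).
Variables (Ur Wr : nat -> set S).
Variable h0 : S -> S.
Variable hs : nat -> seq S -> seq S -> S.
Variable d : nat -> seq S -> seq S -> R.
Variable sigma : nat -> seq S * seq S -> P.

Definition mem := (seq S * seq S)%type.

Definition Wm (t : nat) (m : mem) : set (seq S) :=
  [set ws | size ws = t.+1 /\
            (forall l x, onth ws l = Some x -> Wr l x) /\
            (forall w0, onth ws 0 = Some w0 -> onth m.1 0 = Some (h0 w0)) /\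
            (forall l, (l < t)%N ->
               onth m.1 l.+1 = Some (hs l (take l.+1 ws) (take l.+1 m.2)))].

(* [[M_t]] (the size/space constraints of \mathcal M_t are given by Msp) *)
Definition Reach (Msp : nat -> set mem) (t : nat) : set mem :=
  [set m | Msp t m /\ (forall l x, onth m.2 l = Some x -> Ur l x) /\
           Wm t m !=set0].

Definition Cset t (m : mem) (u : S) : set R :=
  [set d t ws (rcons m.2 u) | ws in Wm t m].
Definition Yset t (m : mem) (u : S) : set S :=
  [set hs t ws (rcons m.2 u) | ws in Wm t m].
Definition Mnext t (m : mem) (u : S) : set mem :=
  [set (rcons m.1 y, rcons m.2 u) | y in Yset t m u].
Definition Pinext t (m : mem) (u : S) : set P :=
  [set sigma t.+1 m' | m' in Mnext t m u].

Variable Msp : nat -> set mem.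

Definition Pirange t : set P := [set sigma t m | m in Reach Msp t].
Definition Mfib t (pi : P) : set mem := [set m | Reach Msp t m /\ sigma t m = pi].
Definition CsetPi t (pi : P) (u : S) : set R :=
  \bigcup_(m in Mfib t pi) Cset t m u.
Definition PinextPi t (pi : P) (u : S) : set P :=
  \bigcup_(m in Mfib t pi) Pinext t m u.

(* Memory-based DP; Vrec n t = V_t when n = T+1-t *)
Fixpoint Vrec (n t : nat) (m : mem) : R :=
  match n with
  | 0 => 0
  | n'.+1 => inf [set Num.max (sup (Cset t m u))
                              (sup [set Vrec n' t.+1 m' | m' in Mnext t m u])
                 | u in Ur t]
  end.
Definition Qmem (T t : nat) (m : mem) (u : S) : R :=
  Num.max (sup (Cset t m u)) (sup [set Vrec (T - t) t.+1 m' | m' in Mnext t m u]).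
Definition Vmem (T t : nat) (m : mem) : R := Vrec (T.+1 - t) t m.

Fixpoint Vhrec (n t : nat) (pi : P) : R :=
  match n with
  | 0 => 0
  | n'.+1 => inf [set Num.max (sup (CsetPi t pi u))
                              (sup [set Vhrec n' t.+1 p' | p' in PinextPi t pi u])
                 | u in Ur t]
  end.
Definition Qhat (T t : nat) (pi : P) (u : S) : R :=
  Num.max (sup (CsetPi t pi u))
          (sup [set Vhrec (T - t) t.+1 p' | p' in PinextPi t pi u]).
Definition Vhat (T t : nat) (pi : P) : R := Vhrec (T.+1 - t) t pi.
End System.

Definition Mspace (S : Type) (Usp Ysp : nat -> set S) (t : nat) : set (mem S) :=
  [set m | size m.1 = t.+1 /\ size m.2 = t /\
           (forall l y, onth m.1 l = Some y -> Ysp l y) /\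
           (forall l u, onth m.2 l = Some u -> Usp l u)].

(* domain prod_{l<=t} W_l x prod_{l<=t} U_l of h_{t+1} and d_t *)
Definition WUspace (S : Type) (Wsp Usp : nat -> set S) (t : nat)
  : set (seq S * seq S) :=
  [set p | size p.1 = t.+1 /\ size p.2 = t.+1 /\
           (forall l w, onth p.1 l = Some w -> Wsp l w) /\
           (forall l u, onth p.2 l = Some u -> Usp l u)].

(* alpha_t, with alpha_{T+1} = 0; arec n t = alpha_t when n = T+1-t;
   LV t is the Lipschitz constant of \hat V_{t+1} *)
Fixpoint arec (eps delta LV : nat -> R) (n t : nat) : R :=
  match n with
  | 0 => 0
  | n'.+1 => Num.max (eps t) (arec eps delta LV n' t.+1 + LV t * delta t)
  end.
Definition alpha (T : nat) (eps delta LV : nat -> R) (t : nat) : R :=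
  arec eps delta LV (T.+1 - t) t.

End Defs.

(* Backward induction on t.  Through the max, the error on Q_t splits into the
   cost term, bounded by eps_t, and the continuation term.  In the latter,
   replacing V_{t+1}(m') by \hat V_{t+1}(\hat sigma_{t+1}(m')) costs at most
   alpha_{t+1} by induction, and moving the supremum of the Lipschitz function
   \hat V_{t+1} from [[\hat Pi_{t+1} | m_t, u_t]] to
   [[\hat Pi_{t+1} | \hat pi_t, u_t]], two sets at Hausdorff distance at most
   delta_t, costs at most L_{\hat V_{t+1}} delta_t.  Infima over u_t are
   1-Lipschitz for the sup distance, which transfers the bound to V_t. *)

From HB Require Import structures.
From mathcomp Require Import all_boot all_order all_algebra.
From mathcomp Require Import boolp classical_sets reals.
From mathcomp Require Import lra zify.
Set Implicit Arguments. Unset Strict Implicit. Unset Printing Implicit Defensive.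
Import Order.TTheory GRing.Theory Num.Theory.
Local Open Scope classical_set_scope.
Local Open Scope ring_scope.

Section SupInfPerturbation.
Variables (R : realType) (I : Type).
Implicit Types (D : set I) (f g : I -> R) (a : R).

Lemma has_ubound_image_le_add D f g a : has_ubound (g @` D) ->
  (forall i, D i -> f i <= g i + a) -> has_ubound (f @` D).
Proof.
move=> [M ubM] fg; exists (M + a) => _ [i Di <-].
by rewrite (le_trans (fg i Di)) // lerD2r ubM //; exists i.
Qed.

Lemma sup_image_le_add D f g a : D !=set0 -> has_ubound (g @` D) ->
  (forall i, D i -> f i <= g i + a) -> sup (f @` D) <= sup (g @` D) + a.
Proof.
move=> [i Di] ubg fg; apply: ge_sup => [|_ [j Dj <-]]; first by exists (f i), i.
by rewrite (le_trans (fg j Dj)) // lerD2r ub_le_sup //; exists j.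
Qed.

(* No boundedness assumption is needed: when [f @` D] has no upper bound,
   neither has [g @` D], and both suprema take the junk value [0]. *)
Lemma sup_image_dist_le D f g a : D !=set0 ->
  (forall i, D i -> `|f i - g i| <= a) -> `|sup (f @` D) - sup (g @` D)| <= a.
Proof.
move=> D0 fg.
have fga i : D i -> f i <= g i + a by move=> /fg/ler_distlDr.
have gfa i : D i -> g i <= f i + a by move=> /fg/ler_distlCDr.
have [ubg | nubg] := pselect (has_ubound (g @` D)).
  have ubf := has_ubound_image_le_add ubg fga.
  rewrite ler_distl (sup_image_le_add D0 ubg fga) andbT lerBlDr.
  exact: sup_image_le_add.
have nubf : ~ has_ubound (f @` D) by move=> /has_ubound_image_le_add/(_ gfa).
rewrite (sup_out (fun h => nubf h.2)) (sup_out (fun h => nubg h.2)) subrr normr0.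
by case: D0 => i /fg; apply: le_trans.
Qed.

Lemma inf_image_dist_le D f g a : D !=set0 ->
  (forall i, D i -> `|f i - g i| <= a) -> `|inf (f @` D) - inf (g @` D)| <= a.
Proof.
move=> D0 fg; rewrite /inf !image_comp -opprD normrN.
by apply: sup_image_dist_le => // i /fg; rewrite /= -opprD normrN.
Qed.

End SupInfPerturbation.

Lemma dist_max_le (R : realDomainType) (x1 x2 y1 y2 a b : R) :
  `|x1 - y1| <= a -> `|x2 - y2| <= b ->
  `|Num.max x1 x2 - Num.max y1 y2| <= Num.max a b.
Proof.
rewrite !ler_distl => /andP[? ?] /andP[? ?].
have : a <= Num.max a b by rewrite le_max lexx.
have : b <= Num.max a b by rewrite le_max lexx orbT.
case: (leP x1 x2) => ?; case: (leP y1 y2) => ? ? ?; apply/andP; split; lra.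
Qed.

Section Excess.
Variables (R : realType) (X : Type).
Implicit Types (eta : X -> X -> R) (A B : set X).

Definition excess eta A B : R := sup [set inf [set eta x y | y in B] | x in A].

Lemma hdistE eta A B :
  hdist eta A B = Num.max (excess eta A B) (excess (fun x y => eta y x) B A).
Proof. by []. Qed.

Lemma excess_le_approx eta A B (K r e : R) a :
  (forall x y, A x -> B y -> 0 <= eta x y <= K) -> B !=set0 ->
  excess eta A B <= r -> A a -> 0 < e -> exists2 b, B b & eta a b < r + e.
Proof.
move=> etaK [b0 Bb0] exAB Aa e0.
have lb x : A x -> has_lbound [set eta x y | y in B].
  by move=> Ax; exists 0 => _ [y By <-]; have /andP[] := etaK _ _ Ax By.
have ub : has_ubound [set inf [set eta x y | y in B] | x in A].
  exists K => _ [x Ax <-]; have /andP[_ etaK0] := etaK _ _ Ax Bb0.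
  by apply: le_trans etaK0; apply: (ge_inf (lb _ Ax)); exists b0.
have B0 : [set eta a y | y in B] !=set0 by exists (eta a b0), b0.
have [_ [b Bb <-] ltb] := inf_adherent e0 (conj B0 (lb _ Aa)).
exists b => //; apply: (lt_le_trans ltb); rewrite lerD2r (le_trans _ exAB) //.
by apply: (ub_le_sup ub); exists a.
Qed.

Lemma sup_image_le_excess eta A B (V : X -> R) (L K r : R) :
  0 <= L -> A !=set0 -> B !=set0 -> has_ubound (V @` B) ->
  (forall x y, A x -> B y -> 0 <= eta x y <= K) ->
  (forall x y, A x -> B y -> V x <= V y + L * eta x y) ->
  excess eta A B <= r -> sup (V @` A) <= sup (V @` B) + L * r.
Proof.
move=> L0 A0 B0 ubV etaK VL exAB; apply: ge_sup; first exact: image_nonempty.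
move=> _ [a Aa <-]; apply/ler_addgt0Pr => e e0.
pose e' := e / (L + 1).
have e'0 : 0 < e' by apply: divr_gt0 => //; lra.
have e'L : e' * (L + 1) = e by rewrite divfK // gt_eqF //; lra.
have [b Bb ltb] := excess_le_approx etaK B0 exAB Aa e'0.
have Vb : V b <= sup (V @` B) by apply: (ub_le_sup ubV); exists b.
have := ler_wpM2l L0 (ltW ltb); have := VL a b Aa Bb.
nra.
Qed.

Lemma sup_image_hdist_le eta (Dom A B : set X) (V : X -> R) (L K r : R) :
  A `<=` Dom -> B `<=` Dom -> A !=set0 -> B !=set0 -> 0 <= L ->
  (forall x y, Dom x -> Dom y -> 0 <= eta x y <= K) ->
  (forall x y, Dom x -> Dom y -> `|V x - V y| <= L * eta x y) ->
  hdist eta A B <= r -> `|sup (V @` A) - sup (V @` B)| <= L * r.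
Proof.
move=> AD BD A0 B0 L0 etaK VL.
have ubV C : C `<=` Dom -> C !=set0 -> has_ubound (V @` C).
  move=> CD [x0 Cx0]; exists (V x0 + L * K) => _ [x Cx <-].
  have /andP[_ etaK0] := etaK _ _ (CD _ Cx) (CD _ Cx0).
  rewrite (le_trans (ler_distlDr (VL _ _ (CD _ Cx) (CD _ Cx0)))) // lerD2l.
  exact: ler_wpM2l.
rewrite hdistE ge_max => /andP[exAB exBA]; rewrite ler_distl andbC.
apply/andP; split.
  apply: (sup_image_le_excess (K := K) L0 A0 B0 (ubV _ BD B0) _ _ exAB).
    by move=> x y Ax By; exact: etaK (AD _ Ax) (BD _ By).
  by move=> x y Ax By; apply: ler_distlDr; exact: VL (AD _ Ax) (BD _ By).
rewrite lerBlDr; apply: (sup_image_le_excess (K := K) L0 B0 A0 (ubV _ AD A0) _ _ exBA).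
  by move=> x y Bx Ay; exact: etaK (AD _ Ay) (BD _ Bx).
by move=> x y Bx Ay; apply: ler_distlCDr; exact: VL (AD _ Ay) (BD _ Bx).
Qed.

End Excess.

Lemma onth_rcons_lt (T : Type) (s : seq T) x n :
  (n < size s)%N -> onth (rcons s x) n = onth s n.
Proof. by move=> lt_ns; rewrite -cats1 onth_cat lt_ns. Qed.

Lemma onth_rcons_size (T : Type) (s : seq T) x : onth (rcons s x) (size s) = Some x.
Proof. by rewrite -cats1 onth_cat ltnn subnn. Qed.

Lemma onth_rcons_forall (T : Type) (A : nat -> T -> Prop) (s : seq T) x :
  (forall n y, onth s n = Some y -> A n y) -> A (size s) x ->
  forall n y, onth (rcons s x) n = Some y -> A n y.
Proof.
move=> As Ax n y; rewrite -cats1 onth_cat; case: ltnP => [_ /As // | le_sn].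
case/onth1P => /eqP; rewrite subn_eq0 => le_ns <-.
by have -> : n = size s by apply/eqP; rewrite eqn_leq le_ns le_sn.
Qed.

Lemma take_rcons_le (T : Type) (s : seq T) x n :
  (n <= size s)%N -> take n (rcons s x) = take n s.
Proof. by move=> le_ns; rewrite -cats1 takel_cat. Qed.

Section Reachability.
Variables (S : Type) (Usp Wsp Ysp Ur Wr : nat -> set S).
Variables (h0 : S -> S) (hs : nat -> seq S -> seq S -> S).

Local Notation Wm := (Wm Wr h0 hs).
Local Notation reachable := (Reach Ur Wr h0 hs (Mspace Usp Ysp)).

Lemma Mspace_rcons t m y u : Mspace Usp Ysp t m -> Ysp t.+1 y -> Usp t u ->
  Mspace Usp Ysp t.+1 (rcons m.1 y, rcons m.2 u).
Proof.
move=> [s1 [s2 [m1Y m2U]]] Yy Uu; rewrite /Mspace /= !size_rcons s1 s2.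
by split; [|split; [|split]] => //; apply: onth_rcons_forall; rewrite ?s1 ?s2.
Qed.

Lemma WUspace_rcons t m ws u : (forall l, (l <= t)%N -> Wr l `<=` Wsp l) ->
  Mspace Usp Ysp t m -> Wm t m ws -> Usp t u -> WUspace Wsp Usp t (ws, rcons m.2 u).
Proof.
move=> WrW [_ [s2 [_ m2U]]] [sw [wsW _]] Uu; rewrite /WUspace /= size_rcons s2.
split; [|split; [|split]] => //; last by apply: onth_rcons_forall; rewrite ?s2.
move=> l w wl; apply: WrW (wsW _ _ wl).
by rewrite -ltnS -sw -onthTE wl.
Qed.

Lemma Wm_rcons t m ws w u : size m.1 = t.+1 -> size m.2 = t ->
  Wm t m ws -> Wr t.+1 w ->
  Wm t.+1 (rcons m.1 (hs t ws (rcons m.2 u)), rcons m.2 u) (rcons ws w).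
Proof.
move=> s1 s2 [sw [wsW [w0Y wsY]]] Ww; split; first by rewrite size_rcons sw.
split; first by apply: onth_rcons_forall; rewrite ?sw.
split=> [w0|l].
  by rewrite !onth_rcons_lt ?s1 ?sw // => /w0Y.
rewrite ltnS leq_eqVlt => /predU1P[-> | lt_lt].
  rewrite take_rcons_le ?sw // take_oversize ?sw // take_oversize ?size_rcons ?s2 //.
  by rewrite -s1 onth_rcons_size.
rewrite onth_rcons_lt ?s1 // wsY // !take_rcons_le ?sw ?s2 //.
exact: ltnW.
Qed.

Lemma Mnext_reachable t m u m' :
  (forall l, (l <= t)%N -> Wr l `<=` Wsp l) -> Wr t.+1 !=set0 ->
  Ur t `<=` Usp t ->
  (forall p, WUspace Wsp Usp t p -> Ysp t.+1 (hs t p.1 p.2)) ->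
  reachable t m -> Ur t u -> Mnext Wr h0 hs t m u m' -> reachable t.+1 m'.
Proof.
move=> WrW [w Ww] UrU hsY [Mm [m2Ur _]] Uu [_ [ws Wws <-] <-].
have [s1 [s2 _]] := Mm.
have WUws := WUspace_rcons WrW Mm Wws (UrU _ Uu).
split; first exact: Mspace_rcons (hsY _ WUws) (UrU _ Uu).
split; first by apply: onth_rcons_forall; rewrite ?s2.
by exists (rcons ws w); apply: Wm_rcons.
Qed.

End Reachability.

Section ApproximateDP.
Variables (R : realType) (S P : Type) (T : nat) (etaP : P -> P -> R).
Variables (Usp Wsp Ysp Ur Wr : nat -> set S) (Phat : nat -> set P).
Variables (h0 : S -> S) (hs : nat -> seq S -> seq S -> S).
Variables (d : nat -> seq S -> seq S -> R) (sigma : nat -> seq S * seq S -> P).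
Variables (eps delta LV : nat -> R).

Local Notation Msp := (Mspace Usp Ysp).
Local Notation reachable := (Reach Ur Wr h0 hs Msp).
Local Notation pi_range := (Pirange Ur Wr h0 hs sigma Msp).
Local Notation Q := (Qmem Ur Wr h0 hs d T).
Local Notation V := (Vmem Ur Wr h0 hs d T).
Local Notation Qh := (Qhat Ur Wr h0 hs d sigma Msp T).
Local Notation Vh := (Vhat Ur Wr h0 hs d sigma Msp T).
Local Notation alphaT := (alpha T eps delta LV).

Hypothesis etaP_ge0 : forall p q, 0 <= etaP p q.
Hypothesis Ur_sub : forall t, (t <= T)%N -> Ur t `<=` Usp t.
Hypothesis Wr_sub : forall t, (t <= T)%N -> Wr t `<=` Wsp t.
Hypothesis Ur_neq0 : forall t, (t <= T)%N -> Ur t !=set0.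
Hypothesis Wr_neq0 : forall t, (t <= T)%N -> Wr t !=set0.
Hypothesis hs_Ysp : forall t, (t < T)%N ->
  forall p, WUspace Wsp Usp t p -> Ysp t.+1 (hs t p.1 p.2).
Hypothesis sigma_Phat : forall t, (t <= T)%N ->
  forall m, Msp t m -> Phat t (sigma t m).
Hypothesis Phat_bounded : forall t, (t <= T)%N -> mbounded etaP (Phat t).
Hypothesis cost_error : forall t, (t <= T)%N ->
  forall m, reachable t m -> forall u, Ur t u ->
  `|sup (Cset Wr h0 hs d t m u)
    - sup (CsetPi Ur Wr h0 hs d sigma Msp t (sigma t m) u)| <= eps t.
Hypothesis next_hdist : forall t, (t <= T)%N ->
  forall m, reachable t m -> forall u, Ur t u ->
  hdist etaP (Pinext Wr h0 hs sigma t m u)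
    (PinextPi Ur Wr h0 hs sigma Msp t (sigma t m) u) <= delta t.
Hypothesis LV_ge0 : forall t, (t <= T)%N -> 0 <= LV t.
Hypothesis LV_last : LV T = 0.
Hypothesis Vhat_lipschitz : forall t, (t < T)%N ->
  forall p1 p2, pi_range t.+1 p1 -> pi_range t.+1 p2 ->
  `|Vh t.+1 p1 - Vh t.+1 p2| <= LV t * etaP p1 p2.

Lemma alphaS t : (t <= T)%N ->
  alphaT t = Num.max (eps t) (alphaT t.+1 + LV t * delta t).
Proof. by move=> tT; rewrite /alpha subSS subSn. Qed.

Lemma VmemE t m : (t <= T)%N -> V t m = inf [set Q t m u | u in Ur t].
Proof. by move=> tT; rewrite /Vmem subSn. Qed.

Lemma VhatE t pi : (t <= T)%N -> Vh t pi = inf [set Qh t pi u | u in Ur t].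
Proof. by move=> tT; rewrite /Vhat subSn. Qed.

Lemma reachable_Mnext t m u m' : (t < T)%N -> reachable t m -> Ur t u ->
  Mnext Wr h0 hs t m u m' -> reachable t.+1 m'.
Proof.
move=> tT; apply: Mnext_reachable (Wr_neq0 tT) (Ur_sub (ltnW tT)) (hs_Ysp tT).
by move=> l lt; apply: Wr_sub (leq_trans lt (ltnW tT)).
Qed.

Lemma next_value_sup_error t m u : (t < T)%N -> reachable t m -> Ur t u ->
  (forall m', reachable t.+1 m' ->
     `|V t.+1 m' - Vh t.+1 (sigma t.+1 m')| <= alphaT t.+1) ->
  `|sup [set Vrec Ur Wr h0 hs d (T - t) t.+1 m' | m' in Mnext Wr h0 hs t m u]
    - sup [set Vh t.+1 p | p in PinextPi Ur Wr h0 hs sigma Msp t (sigma t m) u]|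
  <= alphaT t.+1 + LV t * delta t.
Proof.
move=> tT Rm Uu IH.
have [m0 Mm0] : Mnext Wr h0 hs t m u !=set0.
  case: Rm => _ [_ [ws Wws]]; set y := hs t ws (rcons m.2 u).
  by exists (rcons m.1 y, rcons m.2 u), y => //; exists ws.
have Pinext_range m2 :
    reachable t m2 -> Pinext Wr h0 hs sigma t m2 u `<=` pi_range t.+1.
  by move=> Rm2 _ [m' Mm' <-]; exists m' => //; exact: reachable_Mnext Rm2 Uu Mm'.
have [K etaK] := Phat_bounded tT.
apply: le_trans (ler_distD (sup (Vh t.+1 @` Pinext Wr h0 hs sigma t m u)) _ _) _.
apply: lerD.
  rewrite /Pinext image_comp; apply: sup_image_dist_le; first by exists m0.
  by move=> m' Mm'; exact: IH (reachable_Mnext tT Rm Uu Mm').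
apply: (sup_image_hdist_le (eta := etaP) (Dom := pi_range t.+1) (K := K)) => //.
- exact: Pinext_range.
- by move=> p [m2 [Rm2 _] Pp]; exact: Pinext_range Rm2 _ Pp.
- by exists (sigma t.+1 m0); exists m0.
- by exists (sigma t.+1 m0); exists m; [split | exists m0].
- exact: LV_ge0 (ltnW tT).
- move=> p q [mp [Mp _] <-] [mq [Mq _] <-].
  by rewrite etaP_ge0 etaK //; apply: sigma_Phat.
- exact: Vhat_lipschitz.
- exact: next_hdist (ltnW tT) _ Rm _ Uu.
Qed.

Lemma Qmem_error t m u : (t <= T)%N -> reachable t m -> Ur t u ->
  ((t < T)%N -> forall m', reachable t.+1 m' ->
     `|V t.+1 m' - Vh t.+1 (sigma t.+1 m')| <= alphaT t.+1) ->
  `|Q t m u - Qh t (sigma t m) u| <= alphaT t.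
Proof.
move=> tT Rm Uu IH; rewrite alphaS //; apply: dist_max_le; first exact: cost_error.
have [tlT | tET] := ltnP t T; first exact: next_value_sup_error (IH tlT).
have -> : t = T by apply/eqP; rewrite eqn_leq tT tET.
have sup0_cst (A : Type) (D : set A) : sup [set (0 : R) | _ in D] = 0.
  by rewrite set_cst; case: ifP => _; rewrite ?sup0 ?sup1.
by rewrite subnn /= !sup0_cst subrr normr0 /alpha subnn LV_last mul0r addr0.
Qed.

Lemma Vmem_error_of_Qmem_error t m : (t <= T)%N ->
  (forall u, Ur t u -> `|Q t m u - Qh t (sigma t m) u| <= alphaT t) ->
  `|V t m - Vh t (sigma t m)| <= alphaT t.
Proof.
move=> tT Qerr; rewrite VmemE // VhatE //.
by apply: inf_image_dist_le Qerr; apply: Ur_neq0.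
Qed.

Lemma Vmem_error t m : (t <= T)%N -> reachable t m ->
  `|V t m - Vh t (sigma t m)| <= alphaT t.
Proof.
move=> tT; have [k ltTk] := ubnP (T - t).
elim: k t tT ltTk m => // k IHk t tT ltTk m Rm.
apply: Vmem_error_of_Qmem_error => // u Uu; apply: Qmem_error => // tlT m' Rm'.
apply: IHk => //; lia.
Qed.

Lemma approximation_error t m u : (t <= T)%N -> reachable t m -> Ur t u ->
  `|Q t m u - Qh t (sigma t m) u| <= alphaT t /\
  `|V t m - Vh t (sigma t m)| <= alphaT t.
Proof.
move=> tT Rm Uu; split; last exact: Vmem_error.
by apply: Qmem_error => // tlT m'; apply: Vmem_error.
Qed.

End ApproximateDP.
Theorem theorem3 (R : realType) (S P : Type) (T : nat)
  (etaS : S -> S -> R) (etaM : seq S * seq S -> seq S * seq S -> R)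
  (etaP : P -> P -> R)
  (Usp Wsp Ysp : nat -> set S) (Csp : nat -> set R) (Phat : nat -> set P)
  (Ur Wr : nat -> set S) (h0 : S -> S) (hs : nat -> seq S -> seq S -> S)
  (d : nat -> seq S -> seq S -> R) (sigma : nat -> seq S * seq S -> P)
  (eps delta lambda LV : nat -> R) :
  (* standing assumptions *)
  is_metric etaS -> is_metric etaM -> is_metric etaP ->
  (forall t, (t <= T)%N ->
     mbounded etaS (Usp t) /\ mbounded etaS (Wsp t) /\ mbounded etaS (Ysp t) /\
     Csp t `<=` [set c | 0 <= c] /\ mbounded (fun a b : R => `|a - b|) (Csp t) /\
     Ur t `<=` Usp t /\ Wr t `<=` Wsp t /\ Ur t !=set0 /\ Wr t !=set0) ->
  (forall w, Wsp 0%N w -> Ysp 0%N (h0 w)) ->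
  lipschitz_on etaS etaS (Wsp 0%N) h0 ->
  L_invertible_on etaS etaS (Wsp 0%N) h0 ->
  (forall t, (t < T)%N ->
     (forall p, WUspace Wsp Usp t p -> Ysp t.+1 (hs t p.1 p.2)) /\
     lipschitz_on etaM etaS (WUspace Wsp Usp t) (fun p => hs t p.1 p.2) /\
     L_invertible_on etaM etaS (WUspace Wsp Usp t) (fun p => hs t p.1 p.2)) ->
  (forall t, (t <= T)%N ->
     (forall p, WUspace Wsp Usp t p -> Csp t (d t p.1 p.2)) /\
     lipschitz_on etaM (fun a b : R => `|a - b|) (WUspace Wsp Usp t)
       (fun p => d t p.1 p.2)) ->
  (* approximate information state *)
  (forall t, (t <= T)%N ->
     (forall m, Mspace Usp Ysp t m -> Phat t (sigma t m)) /\
     mbounded etaP (Phat t) /\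
     L_invertible_on etaM etaP (Mspace Usp Ysp t) (sigma t)) ->
  (forall t, (t <= T)%N -> 0 <= eps t /\ 0 <= delta t /\ 0 <= lambda t) ->
  (forall t, (t <= T)%N ->
     forall m, Reach Ur Wr h0 hs (Mspace Usp Ysp) t m ->
     forall u, Ur t u ->
       `| sup (Cset Wr h0 hs d t m u)
          - sup (CsetPi Ur Wr h0 hs d sigma (Mspace Usp Ysp) t (sigma t m) u) |
         <= eps t /\
       hdist etaP (Pinext Wr h0 hs sigma t m u)
         (PinextPi Ur Wr h0 hs sigma (Mspace Usp Ysp) t (sigma t m) u)
         <= delta t /\
       (forall p1 p2,
          Pirange Ur Wr h0 hs sigma (Mspace Usp Ysp) t p1 ->
          Pirange Ur Wr h0 hs sigma (Mspace Usp Ysp) t p2 ->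
          hdist etaP (PinextPi Ur Wr h0 hs sigma (Mspace Usp Ysp) t p1 u)
                     (PinextPi Ur Wr h0 hs sigma (Mspace Usp Ysp) t p2 u)
            <= lambda t * etaP p1 p2)) ->
  (* LV t is a Lipschitz constant of \hat V_{t+1}, with L_{\hat V_{T+1}} = 0 *)
  (forall t, (t <= T)%N -> 0 <= LV t) ->
  LV T = 0 ->
  (forall t, (t < T)%N ->
     forall p1 p2,
       Pirange Ur Wr h0 hs sigma (Mspace Usp Ysp) t.+1 p1 ->
       Pirange Ur Wr h0 hs sigma (Mspace Usp Ysp) t.+1 p2 ->
       `| Vhat Ur Wr h0 hs d sigma (Mspace Usp Ysp) T t.+1 p1
          - Vhat Ur Wr h0 hs d sigma (Mspace Usp Ysp) T t.+1 p2 |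
         <= LV t * etaP p1 p2) ->
  (* conclusion *)
  forall t, (t <= T)%N ->
  forall m, Reach Ur Wr h0 hs (Mspace Usp Ysp) t m ->
  forall u, Ur t u ->
    `| Qmem Ur Wr h0 hs d T t m u
       - Qhat Ur Wr h0 hs d sigma (Mspace Usp Ysp) T t (sigma t m) u |
      <= alpha T eps delta LV t /\
    `| Vmem Ur Wr h0 hs d T t m
       - Vhat Ur Wr h0 hs d sigma (Mspace Usp Ysp) T t (sigma t m) |
      <= alpha T eps delta LV t.
Proof.
move=> _ _ etaP_metric std _ _ _ hs_ok _ sigma_ok _ ais LV_ge0 LV_last Vh_lip.
have etaP_ge0 p q : 0 <= etaP p q by have [] := etaP_metric p q p.
have Ur_sub t : (t <= T)%N -> Ur t `<=` Usp t.
  by move=> /std[_ [_ [_ [_ [_ [? _]]]]]].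
have Wr_sub t : (t <= T)%N -> Wr t `<=` Wsp t.
  by move=> /std[_ [_ [_ [_ [_ [_ [? _]]]]]]].
have Ur_neq0 t : (t <= T)%N -> Ur t !=set0.
  by move=> /std[_ [_ [_ [_ [_ [_ [_ [? _]]]]]]]].
have Wr_neq0 t : (t <= T)%N -> Wr t !=set0.
  by move=> /std[_ [_ [_ [_ [_ [_ [_ [_ ?]]]]]]]].
have hs_Ysp t : (t < T)%N -> forall p, WUspace Wsp Usp t p -> Ysp t.+1 (hs t p.1 p.2).
  by move=> /hs_ok[].
have sigma_Phat t : (t <= T)%N -> forall m, Mspace Usp Ysp t m -> Phat t (sigma t m).
  by move=> /sigma_ok[].
have Phat_bounded t : (t <= T)%N -> mbounded etaP (Phat t).
  by move=> /sigma_ok[_ []].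
move=> t tT m Rm u Uu.
apply: (approximation_error etaP_ge0 Ur_sub Wr_sub Ur_neq0 Wr_neq0 hs_Ysp
  sigma_Phat Phat_bounded _ _ LV_ge0 LV_last Vh_lip tT Rm Uu).
- by move=> s sT ms Rms us /(ais s sT ms Rms)[].
- by move=> s sT ms Rms us /(ais s sT ms Rms)[_ []].
Qed.
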